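(* Let $G$ be a connected graph with $n$ vertices, and let $L$ be a list-assignment of $G$. If $|L(v)|\ge \deg(v)+1$ for all $v\in V(G)$ and $|L(w)|\ge \deg(w)+2$ for at least one $w\in V(G)$, then $\mathcal{C}(G,L)$ is connected and has diameter at most $\tfrac12(3n^2+5n)$.
   Context: A list-assignment $L$ of a graph $G$ assigns to each vertex $v$ a finite set $L(v)\subseteq\mathbb{N}$. A (proper) $L$-colouring is a proper colouring $\varphi:V(G)\to\mathbb{N}$ with $\varphi(v)\in L(v)$ for all $v$. A recolouring step changes the colour of a single vertex $v$ to another colour of $L(v)$ so that the result is again a proper $L$-colouring. The list colouring reconfiguration graph $\mathcal{C}(G,L)$ has as vertices all proper $L$-colourings of $G$, two being adjacent if one is obtained from the other by a single recolouring step. $\deg(v)$ is the number of neighbours of $v$. *)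

From mathcomp Require Import all_boot.
From mathcomp Require Import finmap.
Set Implicit Arguments. Unset Strict Implicit. Unset Printing Implicit Defensive.
Local Open Scope fset_scope.

Definition simple_graph (T : finType) (e : rel T) : Prop :=
  symmetric e /\ irreflexive e.

Definition graph_connected (T : finType) (e : rel T) : Prop :=
  forall x y : T, connect e x y.

Definition deg (T : finType) (e : rel T) (v : T) : nat := #|[set w | e v w]|.

Definition is_Lcol (T : finType) (e : rel T) (L : T -> {fset nat})
    (c : {ffun T -> nat}) : bool :=
  [forall v, c v \in L v] && [forall v, forall w, e v w ==> (c v != c w)].

Definition recolour_step (T : finType) (e : rel T) (L : T -> {fset nat})
    (c c' : {ffun T -> nat}) : bool :=
  [&& is_Lcol e L c, is_Lcol e L c' &
      [exists v, (c v != c' v) && [forall w, (w != v) ==> (c w == c' w)]]].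

(* distance in the reconfiguration graph C(G,L) is at most k *)
Fixpoint reconf_within (T : finType) (e : rel T) (L : T -> {fset nat})
    (k : nat) (c c' : {ffun T -> nat}) : Prop :=
  c = c' \/
  match k with
  | 0 => False
  | k'.+1 => exists c'', recolour_step e L c c'' /\ reconf_within e L k' c'' c'
  end.

From mathcomp Require Import all_boot.
From mathcomp Require Import finmap zify.
Set Implicit Arguments. Unset Strict Implicit. Unset Printing Implicit Defensive.

(* Let w be a vertex with |L(w)| >= deg(w) + 2 and h a breadth-first height
   from w.  Call x blocked when no other colour of L(x) is free at x.  A blocked
   x has |L(x)| = deg(x) + 1, its neighbours carry distinct colours of L(x),
   and x <> w; so the colour of x can be changed in h(x) + 1 steps by first
   changing the colour of a parent of x and then handing x the parent's old
   colour.  A target colouring is reached by fixing the vertices in order of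
   decreasing height: to give v its target colour, the neighbours of v having
   that colour are cleared one at a time, in two steps each (when two of them
   share the colour, v is not blocked, so v steps aside and the neighbour takes
   the old colour of v), the last one by the cascade above.  Fixing a vertex
   while k others remain costs at most 3k + 1 steps. *)

Section Reconfiguration.
Variables (T : finType) (e : rel T) (L : T -> {fset nat}).
Implicit Types (a b c g : {ffun T -> nat}) (x y : T).

Lemma reconf_within_refl k c : reconf_within e L k c c.
Proof. by case: k; left. Qed.

Lemma reconf_within_leq m n a b :
  m <= n -> reconf_within e L m a b -> reconf_within e L n a b.
Proof.
elim: m n a => [|m IH] n a le_mn /=; first by case=> // ->; apply: reconf_within_refl.
case: n le_mn => // n le_mn [->|[c [ac cb]]]; first by left.
by right; exists c; split=> //; apply: IH cb.
Qed.

Lemma reconf_within_trans m n a b c :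
  reconf_within e L m a b -> reconf_within e L n b c ->
  reconf_within e L (m + n) a c.
Proof.
elim: m a => [|m IH] a; first by case=> // ->.
case=> [-> bc|[d [ad db]] bc]; first by apply: reconf_within_leq bc; rewrite leq_addl.
by rewrite addSn; right; exists d; split=> //; apply: IH db bc.
Qed.

Lemma reconf_within_step a b : recolour_step e L a b -> reconf_within e L 1 a b.
Proof. by right; exists b; split=> //; left. Qed.

Lemma recolour_step_Lcol a b : recolour_step e L a b -> is_Lcol e L b.
Proof. by case/and3P. Qed.

Lemma Lcol_mem g x : is_Lcol e L g -> g x \in L x.
Proof. by case/andP=> /forallP. Qed.

Lemma Lcol_edge g x y : is_Lcol e L g -> e x y -> g x != g y.
Proof. by case/andP=> _ /forallP /(_ x) /forallP /(_ y) /implyP. Qed.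

Definition recolour g x d : {ffun T -> nat} :=
  [ffun y => if y == x then d else g y].

Definition recolourable g x :=
  has (fun d => (d != g x) && [forall y, e x y ==> (g y != d)]) (L x).

Hypotheses (e_sym : symmetric e) (e_irr : irreflexive e).

Lemma recolour_step_recolour g x d :
  is_Lcol e L g -> d \in L x -> d != g x -> (forall y, e x y -> g y != d) ->
  recolour_step e L g (recolour g x d).
Proof.
move=> gc dL dx fresh; have [/forallP gL /forallP gE] := andP gc.
have gc' : is_Lcol e L (recolour g x d).
  apply/andP; split; apply/forallP => y; rewrite !ffunE.
    by case: eqP => [->|_]; [exact: dL | exact: gL].
  apply/forallP => z; apply/implyP => eyz; rewrite !ffunE.
  case: (eqVneq y x) => [yx|yx]; case: (eqVneq z x) => [zx|zx].
  - by rewrite yx zx e_irr in eyz.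
  - by rewrite eq_sym fresh // -yx.
  - by rewrite fresh // -zx e_sym.
  - exact: (implyP (forallP (gE y) z)).
rewrite /recolour_step gc gc'; apply/existsP; exists x; rewrite ffunE eqxx eq_sym dx.
by apply/forallP => y; apply/implyP => yx; rewrite ffunE (negbTE yx).
Qed.

Lemma recolourable_step g x : is_Lcol e L g -> recolourable g x ->
  exists2 d, d != g x & recolour_step e L g (recolour g x d).
Proof.
move=> gc /hasP [d dL /andP [dx /forallP fresh]]; exists d => //.
by apply: recolour_step_recolour => // y exy; have /implyP := fresh y; apply.
Qed.

Lemma blocked_colours_on_nbrs g x : ~~ recolourable g x ->
  {subset rem (g x) (L x) <= map g (enum [set y | e x y])}.
Proof.
move=> blocked d; rewrite mem_rem_uniq ?fset_uniq // inE => /andP [dx dL].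
apply: contraNT blocked => nd; apply/hasP; exists d => //; rewrite dx.
apply/forallP => y; apply/implyP => exy; apply: contra nd => /eqP <-.
by rewrite map_f // mem_enum inE.
Qed.

Lemma blocked_card g x : is_Lcol e L g -> ~~ recolourable g x ->
  #|` L x| <= deg e x + 1.
Proof.
move=> gc /blocked_colours_on_nbrs /(uniq_leq_size (rem_uniq _ (fset_uniq _))).
by rewrite size_rem ?Lcol_mem // size_map -cardE -subn1 leq_subLR addnC.
Qed.

Lemma recolourable_of_card g x : is_Lcol e L g -> deg e x + 2 <= #|` L x| ->
  recolourable g x.
Proof.
move=> gc L_x; apply/negPn/negP => /(blocked_card gc); lia.
Qed.

(* Pigeonhole: the #|L x| - 1 colours other than g x all occur on the at most
   #|L x| - 1 neighbours of x. *)
Lemma blocked_nbrs g x : is_Lcol e L g -> ~~ recolourable g x ->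
  deg e x + 1 <= #|` L x| ->
  {in [set y | e x y] &, injective g} /\ forall y, e x y -> g y \in L x.
Proof.
move=> gc /blocked_colours_on_nbrs sub; rewrite addn1 => L_x.
have uniq_rem := rem_uniq (g x) (fset_uniq (L x)).
have le_size : size (map g (enum [set y | e x y])) <= size (rem (g x) (L x)).
  by rewrite size_map -cardE size_rem ?Lcol_mem // -ltnS (ltn_predK L_x).
have [_ eq_rem] := uniq_min_size uniq_rem sub le_size.
split; first exact/dinjectiveP/(leq_size_uniq uniq_rem sub le_size).
move=> y exy; apply: (mem_rem (x := g x)).
by rewrite eq_rem map_f // mem_enum inE.
Qed.

End Reconfiguration.

Section Layering.
Variables (T : finType) (e : rel T) (w : T) (h : T -> nat).
Hypothesis h_root : h w = 0.

Definition parent_closed (U : {set T}) :=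
  forall x, x \in U -> x != w -> exists p, [/\ p \in U, e p x & (h p).+1 = h x].

Lemma parent_closed_heights U x m : parent_closed U -> x \in U -> m <= h x ->
  exists2 y, y \in U & h y = m.
Proof.
move=> pcU; move hx: (h x) => n; elim: n x hx => [|n IH] x hx xU.
  by rewrite leqn0 => /eqP ->; exists x.
rewrite leq_eqVlt => /orP [/eqP ->|]; first by exists x.
have xw : x != w by apply/eqP => xw; rewrite xw h_root in hx.
have [p [pU _ hp]] := pcU x xU xw.
by rewrite ltnS; apply: IH pU; move: hp; rewrite hx => -[].
Qed.

Lemma height_lt_card U x : parent_closed U -> x \in U -> h x < #|U|.
Proof.
move=> pcU xU.
have sub : {subset iota 0 (h x).+1 <= map h (enum U)}.
  move=> m; rewrite mem_iota add0n ltnS => /andP [_].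
  move=> /(parent_closed_heights pcU xU) [y yU <-].
  by rewrite map_f // mem_enum.
by have := uniq_leq_size (iota_uniq 0 _) sub; rewrite size_iota size_map -cardE.
Qed.

Lemma parent_closed_D1 U v : parent_closed U -> v \in U ->
  (forall y, y \in U -> h y <= h v) -> parent_closed (U :\ v).
Proof.
move=> pcU vU vmax x; rewrite !inE => /andP [xv xU] xw.
have [p [pU epx hp]] := pcU x xU xw; exists p; split=> //.
rewrite !inE pU andbT; apply: contraTneq (vmax x xU) => pv.
by rewrite -hp pv ltnn.
Qed.

End Layering.

Lemma exists_bfs_height (T : finType) (e : rel T) (w : T) :
  (forall x, connect e w x) ->
  exists h : T -> nat, [/\ h w = 0, forall x y, e x y -> h y <= (h x).+1 &
    forall x, x != w -> exists2 p, e p x & (h p).+1 = h x].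
Proof.
move=> conn.
pose walk_to x n := [exists p : n.-tuple T, path e w p && (last w p == x)].
have walk_ex x : exists n, walk_to x n.
  have /connectP [p wp ->] := conn x.
  by exists (size p); apply/existsP; exists (in_tuple p); rewrite wp eqxx.
pose h x := ex_minn (walk_ex x).
have walk_h x : walk_to x (h x) by rewrite /h; case: ex_minnP.
have h_min x n : walk_to x n -> h x <= n by rewrite /h; case: ex_minnP => m _; apply.
have h_edge x y : e x y -> h y <= (h x).+1.
  move=> exy; apply: h_min; have /existsP [p /andP [wp /eqP px]] := walk_h x.
  apply/existsP; exists [tuple of rcons p y].
  by rewrite /= rcons_path wp px exy last_rcons eqxx.
exists h; split=> //.
  apply/eqP; rewrite -leqn0; apply: h_min.
  by apply/existsP; exists (in_tuple [::]); rewrite /= eqxx.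
move=> x xw; have /existsP [[p /= /eqP size_p] /andP [wp /eqP px]] := walk_h x.
case/lastP: p size_p wp px => [|q z]; first by move=> _ _ /= wx; rewrite wx eqxx in xw.
rewrite size_rcons rcons_path last_rcons => size_p /andP [wq eqz] zx; subst z.
exists (last w q) => //; apply/eqP; rewrite eqn_leq h_edge // andbT -size_p ltnS.
by apply: h_min; apply/existsP; exists (in_tuple q); rewrite wq eqxx.
Qed.

Lemma diam_bound_step k :
  (3 * k ^ 2 + 5 * k) %/ 2 + (3 * k).+1 <= (3 * k.+1 ^ 2 + 5 * k.+1) %/ 2.
Proof.
have -> : 3 * k.+1 ^ 2 + 5 * k.+1 = (3 * k + 4) * 2 + (3 * k ^ 2 + 5 * k) by nia.
by rewrite divnMDl // addnC leq_add2r; lia.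
Qed.

Section Recolouring.
Variables (T : finType) (e : rel T) (L : T -> {fset nat}).
Hypotheses (e_sym : symmetric e) (e_irr : irreflexive e).
Hypothesis L_deg : forall v, deg e v + 1 <= #|` L v|.
Variables (w : T) (h : T -> nat).
Hypothesis L_w : deg e w + 2 <= #|` L w|.
Hypothesis h_root : h w = 0.
Hypothesis h_edge : forall x y, e x y -> h y <= (h x).+1.
Implicit Types (a b g : {ffun T -> nat}) (U : {set T}).

Definition change_below U x g g' := forall y, g' y != g y ->
  y \in U /\ (y = x \/ h y < h x /\ ((h y).+1 = h x -> g' y != g x)).

Lemma change_colour_recolourable U x g k : x \in U -> is_Lcol e L g ->
  recolourable e L g x -> exists g', [/\ is_Lcol e L g',
    reconf_within e L k.+1 g g', g' x != g x & change_below U x g g'].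
Proof.
move=> xU gc /(recolourable_step e_sym e_irr gc) [d dx st].
exists (recolour g x d); split.
- exact: recolour_step_Lcol st.
- exact: reconf_within_leq (reconf_within_step st).
- by rewrite ffunE eqxx.
- move=> y; rewrite ffunE; case: (eqVneq y x) => [-> _|_]; last by rewrite eqxx.
  by split; [|left].
Qed.

(* A blocked vertex x takes over the old colour of its parent p, after p has
   been recoloured recursively; only vertices below x are touched. *)
Lemma change_colour U x g : parent_closed e w h U -> x \in U -> is_Lcol e L g ->
  exists g', [/\ is_Lcol e L g', reconf_within e L (h x).+1 g g', g' x != g x &
    change_below U x g g'].
Proof.
move=> pcU; move hx: (h x) => n; elim: n x g hx => [|n IH] x g hx xU gc.
all: case: (boolP (recolourable e L g x)) => [|blocked];
  first exact: change_colour_recolourable.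
all: have xw : x != w by apply: contraNneq blocked => ->; apply: recolourable_of_card.
  by have [p [_ _]] := pcU x xU xw; rewrite hx.
have [p [pU epx hp]] := pcU x xU xw.
have {}hp : h p = n by move: hp; rewrite hx => -[].
have [g2 [g2c r2 g2p below2]] := IH p g hp pU gc.
have [inj nbrL] := blocked_nbrs gc blocked (L_deg x).
have exp : e x p by rewrite e_sym.
have g2x : g2 x = g x.
  apply/eqP; apply: contraT => /below2 [_ [xp|[]]]; last by rewrite hx hp ltnNge leqnSn.
  by rewrite xp e_irr in epx.
have fresh z : e x z -> g2 z != g p.
  move=> exz; case: (eqVneq z p) => [->//|zp].
  case: (eqVneq (g2 z) (g z)) => [->|/below2 [_ [zp'|[lt_zp _]]]].
  - by apply: contra_neq zp => gzp; apply: inj; rewrite ?inE.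
  - by rewrite zp' eqxx in zp.
  - have ezx : e z x by rewrite e_sym.
    by have := h_edge ezx; lia.
have gp_g2x : g p != g2 x by rewrite g2x (Lcol_edge gc epx).
have st := recolour_step_recolour e_sym e_irr g2c (nbrL p exp) gp_g2x fresh.
exists (recolour g2 x (g p)); split.
- exact: recolour_step_Lcol st.
- by rewrite -addn1; apply: reconf_within_trans r2 (reconf_within_step st).
- by rewrite ffunE eqxx (Lcol_edge gc epx).
move=> y; rewrite ffunE; case: (eqVneq y x) => [-> _|yx ch]; first by split; [|left].
have [yU [yp|[lt_yp _]]] := below2 y ch; split=> //; right; last by lia.
by subst y; rewrite hx hp; split=> // _; rewrite -g2x (Lcol_edge g2c epx).
Qed.

Definition nbrs_coloured g v c := [set y | e v y && (g y == c)].

(* If u is blocked, then v is not, since two of its neighbours share the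
   colour c: move v aside and give u the old colour of v. *)
Lemma nbrs_coloured_shrink g v c u : is_Lcol e L g ->
  u \in nbrs_coloured g v c -> 1 < #|nbrs_coloured g v c| ->
  exists g2, [/\ is_Lcol e L g2, reconf_within e L 2 g g2,
    nbrs_coloured g2 v c = nbrs_coloured g v c :\ u &
    forall y, y != u -> y != v -> g2 y = g y].
Proof.
move=> gc uS S_gt1; have /andP [evu /eqP guc] : e v u && (g u == c) by rewrite inE in uS.
have uv : u != v by apply: contraTneq evu => ->; rewrite e_irr.
have gv_gu : g v != g u := Lcol_edge gc evu.
case: (boolP (recolourable e L g u)) => [|blocked_u].
  move=> /(recolourable_step e_sym e_irr gc) [d du st]; exists (recolour g u d); split.
  - exact: recolour_step_Lcol st.
  - exact: reconf_within_leq (reconf_within_step st).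
  - apply/setP => y; rewrite !inE ffunE; case: (eqVneq y u) => [->|//].
    by rewrite -guc (negbTE du) andbF.
  - by move=> y yu _; rewrite ffunE (negbTE yu).
have v_free : recolourable e L g v.
  apply: contraT => blocked_v; have [inj _] := blocked_nbrs gc blocked_v (L_deg v).
  rewrite (cardsD1 u) uS ltnS card_gt0 in S_gt1; have [u' u'S] := set0Pn _ S_gt1.
  move: u'S; rewrite !inE => /andP [u'u /andP [evu' /eqP gu'c]].
  suff : u' = u by move/eqP; rewrite (negbTE u'u).
  by apply: inj; rewrite ?inE // gu'c guc.
have [d dv st1] := recolourable_step e_sym e_irr gc v_free.
have [inj_u nbrL_u] := blocked_nbrs gc blocked_u (L_deg u).
have gv_L : g v \in L u by rewrite nbrL_u // e_sym.
have gv_g1u : g v != recolour g v d u by rewrite ffunE (negbTE uv).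
have fresh z : e u z -> recolour g v d z != g v.
  move=> euz; rewrite ffunE; case: ifP => [_ //|/negbT zv].
  by apply: contra_neq zv => gzv; apply: inj_u; rewrite ?inE // e_sym.
have st2 := recolour_step_recolour e_sym e_irr (recolour_step_Lcol st1) gv_L gv_g1u fresh.
exists (recolour (recolour g v d) u (g v)); split.
- exact: recolour_step_Lcol st2.
- exact: reconf_within_trans (reconf_within_step st1) (reconf_within_step st2).
- apply/setP => y; rewrite !inE !ffunE; case: (eqVneq y u) => [->|_] /=.
    by rewrite -guc (negbTE gv_gu) andbF.
  by case: (eqVneq y v) => [->|//]; rewrite e_irr.
- by move=> y yu yv; rewrite !ffunE (negbTE yu) (negbTE yv).
Qed.

Section FixColour.
Variables (U : {set T}) (v : T) (c : nat).
Hypotheses (pcU : parent_closed e w h U) (vU : v \in U).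
Hypothesis v_highest : forall y, y \in U -> h y <= h v.
Hypothesis c_L : c \in L v.

(* The unique neighbour u of colour c is recoloured by change_colour; the
   vertices it disturbs lie below u, hence cannot be v or receive colour c
   next to v. *)
Lemma fix_colour_single g u : is_Lcol e L g ->
  nbrs_coloured g v c = [set u] -> u \in U ->
  exists g', [/\ is_Lcol e L g', reconf_within e L (h v).+2 g g', g' v = c &
    forall y, y \notin U -> g' y = g y].
Proof.
move=> gc S1 uU; have : u \in nbrs_coloured g v c by rewrite S1 set11.
rewrite inE => /andP [evu /eqP guc].
have uv : u != v by apply: contraTneq evu => ->; rewrite e_irr.
have [g2 [g2c r2 g2u below2]] := change_colour pcU uU gc.
have hu := v_highest uU.
have g2v : g2 v = g v.
  apply/eqP; apply: contraT => /below2 [_ [vu|[lt_vu _]]]; last by lia.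
  by rewrite vu eqxx in uv.
have fresh z : e v z -> g2 z != c.
  move=> evz; case: (eqVneq z u) => [->|zu]; first by rewrite -guc.
  case: (eqVneq (g2 z) (g z)) => [->|/below2 [_ [zu'|[lt_zu]]]].
  - apply: contra_neq zu => gzc.
    by apply/set1P; rewrite -S1 inE evz gzc eqxx.
  - by rewrite zu' eqxx in zu.
  - have ezv : e z v by rewrite e_sym.
    by rewrite -guc; apply; have := h_edge ezv; lia.
have c_g2v : c != g2 v by rewrite g2v -guc eq_sym (Lcol_edge gc evu).
have st := recolour_step_recolour e_sym e_irr g2c c_L c_g2v fresh.
exists (recolour g2 v c); split.
- exact: recolour_step_Lcol st.
- apply: reconf_within_leq (reconf_within_trans r2 (reconf_within_step st)).
  by rewrite addn1 !ltnS.
- by rewrite ffunE eqxx.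
move=> y yU; rewrite ffunE; case: (eqVneq y v) => [yv|_]; first by rewrite yv vU in yU.
by apply/eqP; apply: contraT => /below2 [yU' _]; rewrite yU' in yU.
Qed.

Lemma fix_colour g : is_Lcol e L g ->
  (forall y, y \notin U -> e v y -> g y != c) ->
  exists g', [/\ is_Lcol e L g',
    reconf_within e L (#|nbrs_coloured g v c|.*2 + h v).+1 g g', g' v = c &
    forall y, y \notin U -> g' y = g y].
Proof.
move S: #|_| => s; elim: s g S => [|s IH] g S gc out_c.
  case: (eqVneq (g v) c) => [gvc|gvc].
    by exists g; split=> //; apply: reconf_within_refl.
  have fresh y : e v y -> g y != c.
    move=> evy; apply/negP => /eqP gyc.
    by have /setP /(_ y) := cards0_eq S; rewrite !inE evy gyc eqxx.
  have c_gv : c != g v by rewrite eq_sym.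
  have st := recolour_step_recolour e_sym e_irr gc c_L c_gv fresh.
  exists (recolour g v c); split.
  - exact: recolour_step_Lcol st.
  - exact: reconf_within_leq (reconf_within_step st).
  - by rewrite ffunE eqxx.
  - by move=> y yU; rewrite ffunE; case: eqVneq => // yv; rewrite yv vU in yU.
have [u uS] : exists u, u \in nbrs_coloured g v c by apply/set0Pn; rewrite -card_gt0 S.
have uU : u \in U.
  move: uS; rewrite inE => /andP [evu /eqP guc].
  by apply/negPn/negP => /out_c /(_ evu); rewrite guc eqxx.
case: (posnP s) => [s0|s_gt0].
  have /cards1P [u' S1] : #|nbrs_coloured g v c| == 1 by rewrite S s0.
  move: uS uU; rewrite S1 in_set1 => /eqP -> uU.
  have [g' [g'c r' g'v out']] := fix_colour_single gc S1 uU.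
  by exists g'; split=> //; apply: reconf_within_leq r'; lia.
have S_gt1 : 1 < #|nbrs_coloured g v c| by rewrite S ltnS.
have [g2 [g2c r2 S2 same2]] := nbrs_coloured_shrink gc uS S_gt1.
have S2_card : #|nbrs_coloured g2 v c| = s.
  by move: S; rewrite S2 (cardsD1 u) uS => -[].
have out2 y : y \notin U -> g2 y = g y.
  by move=> yU; apply: same2; apply: contraNneq yU => ->.
have out2_c y : y \notin U -> e v y -> g2 y != c.
  by move=> yU; rewrite out2 //; apply: out_c.
have [g' [g'c r' g'v out']] := IH g2 S2_card g2c out2_c.
exists g'; split=> //.
- apply: reconf_within_leq (reconf_within_trans r2 r'); lia.
- by move=> y yU; rewrite out' // out2.
Qed.

End FixColour.

(* Fix the vertices of U one at a time, highest first: fixing v costs at most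
   2 #|U :\ v| + h v + 1 <= 3 #|U :\ v| + 1 steps. *)
Lemma reconf_parent_closed U a b : parent_closed e w h U ->
  is_Lcol e L a -> is_Lcol e L b -> (forall y, y \notin U -> a y = b y) ->
  reconf_within e L ((3 * #|U| ^ 2 + 5 * #|U|) %/ 2) a b.
Proof.
move cardU: #|U| => k; elim: k U a cardU => [|k IH] U a cardU pcU ac bc ab.
  have -> : a = b by apply/ffunP => y; apply: ab; rewrite (cards0_eq cardU) inE.
  exact: reconf_within_refl.
have [x0 x0U] : exists x0, x0 \in U by apply/set0Pn; rewrite -card_gt0 cardU.
have [v vU v_highest] := @arg_maxnP _ x0 (mem U) h x0U.
have {}vU : v \in U := vU.
have {}v_highest y : y \in U -> h y <= h v := v_highest y.
have out_c y : y \notin U -> e v y -> a y != b v.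
  by move=> yU evy; rewrite ab // eq_sym (Lcol_edge bc evy).
have [g [gc r g_v out_g]] := fix_colour pcU vU v_highest (Lcol_mem v bc) ac out_c.
have cardD : #|U :\ v| = k by move: cardU; rewrite (cardsD1 v) vU => -[].
have S_le : #|nbrs_coloured a v (b v)| <= k.
  rewrite -cardD; apply/subset_leq_card/subsetP => y.
  rewrite !inE => /andP [evy /eqP ayb]; apply/andP; split.
    by apply: contraTneq evy => ->; rewrite e_irr.
  by apply/negPn/negP => /out_c /(_ evy); rewrite ayb eqxx.
have hv : h v <= k by have := height_lt_card h_root pcU vU; rewrite cardU ltnS.
have gb y : y \notin U :\ v -> g y = b y.
  by rewrite !inE negb_and negbK => /orP [/eqP -> // | yU]; rewrite out_g // ab.
have pcD := parent_closed_D1 pcU vU v_highest.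
have := reconf_within_trans r (IH _ g cardD pcD gc bc gb).
by apply: reconf_within_leq; have := diam_bound_step k; lia.
Qed.

End Recolouring.

Local Open Scope fset_scope.

Theorem mainTheorem1 (T : finType) (e : rel T) (L : T -> {fset nat}) :
  simple_graph e -> graph_connected e ->
  (forall v, deg e v + 1 <= #|` L v|)%N ->
  (exists w, deg e w + 2 <= #|` L w|)%N ->
  (forall c c' : {ffun T -> nat}, is_Lcol e L c -> is_Lcol e L c' ->
     exists k, reconf_within e L k c c') /\
  (forall c c' : {ffun T -> nat}, is_Lcol e L c -> is_Lcol e L c' ->
     reconf_within e L ((3 * #|T| ^ 2 + 5 * #|T|) %/ 2) c c').
Proof.
move=> [e_sym e_irr] conn L_deg [w L_w].
have [h [h_root h_edge h_parent]] := exists_bfs_height (conn w).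
have pcT : parent_closed e w h [set: T].
  by move=> x _ /h_parent [p epx hp]; exists p; rewrite inE.
have diam c c' : is_Lcol e L c -> is_Lcol e L c' ->
    reconf_within e L ((3 * #|T| ^ 2 + 5 * #|T|) %/ 2) c c'.
  move=> cc cc'; rewrite -cardsT.
  apply: (reconf_parent_closed e_sym e_irr L_deg L_w h_root h_edge pcT) => //.
  by move=> y; rewrite inE.
by split=> // c c' cc cc'; exists ((3 * #|T| ^ 2 + 5 * #|T|) %/ 2); apply: diam.
Qed.
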